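(* Assume the monotone likelihood ratio property: for all $\rho,\rho'\in\mathcal{R}$ with $\rho>\rho'$, $\frac{\Pr\{R=\rho\mid Y=1\}}{\Pr\{R=\rho\mid Y=0\}}\ge\frac{\Pr\{R=\rho'\mid Y=1\}}{\Pr\{R=\rho'\mid Y=0\}}$. Then for every $1\le m\le n$, the accuracy $$\theta(\epsilon)=\frac{1}{m}\sum_{i\in\mathcal{N}}\Pr\{J_{i,\epsilon}=1,\ Y_i=1\}$$ of the exponential mechanism $\mathscr{B}_\epsilon$ is increasing in $\epsilon\ge0$.
   Context: There are $n$ individuals indexed by $\mathcal{N}=\{1,\dots,n\}$. Individual $i$ is described by a random tuple $(X_i,A_i,Y_i)$, with features $X_i\in\mathcal{X}$, protected attribute $A_i\in\{0,1\}$ and qualification state $Y_i\in\{0,1\}$; the tuples are i.i.d. with a common distribution $\mathsf{F}$, and $(X,A,Y)$ is a generic tuple with this distribution. A fixed function $r:\mathcal{X}\to\mathcal{R}$ is given, with $\mathcal{R}\subset[0,1]$ finite; $R_i=r(X_i)$, $R=r(X)$. Let $\mathcal{S}$ be the family of all $m$-element subsets of $\mathcal{N}$. For $\epsilon\ge0$, the exponential mechanism $\mathscr{B}_\epsilon$, given realized scores $(r_1,\dots,r_n)$, selects $\mathcal{G}\in\mathcal{S}$ with probability $\exp(\epsilon\sum_{j\in\mathcal{G}}r_j/2)/\sum_{\mathcal{G}'\in\mathcal{S}}\exp(\epsilon\sum_{j\in\mathcal{G}'}r_j/2)$. $J_{i,\epsilon}$ is the indicator that individual $i$ belongs to the set selected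 by $\mathscr{B}_\epsilon$. *)

From HB Require Import structures.
From mathcomp Require Import all_boot all_order all_algebra.
From mathcomp Require Import all_classical all_reals all_analysis.
Set Implicit Arguments. Unset Strict Implicit. Unset Printing Implicit Defensive.
Import Order.TTheory GRing.Theory Num.Theory.
Local Open Scope ring_scope.
Local Open Scope classical_set_scope.

Section Defs.
Context {R : realType} {d : measure_display} {X : measurableType d}.

(* A tuple (X, A, Y) is the element ((x, a), y) of X * bool * bool. *)

Definition probRY (F : probability (X * bool * bool)%type R) (r : X -> R)
  (rho : R) (y : bool) : R :=
  fine (F [set t | r t.1.1 = rho /\ t.2 = y]).

Definition probY (F : probability (X * bool * bool)%type R) (y : bool) : R :=
  fine (F [set t | t.2 = y]).

Definition condprobR (F : probability (X * bool * bool)%type R) (r : X -> R)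
  (rho : R) (y : bool) : R := probRY F r rho y / probY F y.

(* Monotone likelihood ratio property, cross-multiplied form of
   Pr{R=rho|Y=1}/Pr{R=rho|Y=0} >= Pr{R=rho'|Y=1}/Pr{R=rho'|Y=0}. *)
Definition MLR (F : probability (X * bool * bool)%type R) (r : X -> R)
  (Rs : seq R) : Prop :=
  forall rho rho', rho \in Rs -> rho' \in Rs -> rho' < rho ->
    condprobR F r rho' true * condprobR F r rho false
    <= condprobR F r rho true * condprobR F r rho' false.

End Defs.

Definition expmech_weight {R : realType} (n m : nat) (eps : R)
  (rs : 'I_n -> R) (G : {set 'I_n}) : R :=
  expR (eps * (\sum_(j in G) rs j) / 2) /
  \sum_(G' : {set 'I_n} | #|G'| == m) expR (eps * (\sum_(j in G') rs j) / 2).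

(* Probability (over the mechanism's randomness) that individual i is selected,
   i.e. Pr{J_{i,eps} = 1 | scores rs}. *)
Definition select_prob {R : realType} (n m : nat) (eps : R)
  (rs : 'I_n -> R) (i : 'I_n) : R :=
  \sum_(G : {set 'I_n} | (#|G| == m) && (i \in G)) expmech_weight m eps rs G.

(* Accuracy theta(eps) = (1/m) sum_i Pr{J_{i,eps} = 1, Y_i = 1}, where the
   (R_i, Y_i) are i.i.d. with the law of (r(X), Y) under F: the joint
   probability is the sum over all realizations z of ((R_j, Y_j))_j of
   prod_j Pr{R=R_j, Y=Y_j} * Pr{J_i = 1 | scores} * [Y_i = 1]. *)
Definition accuracy {R : realType} {d : measure_display} {X : measurableType d}
  (F : probability (X * bool * bool)%type R) (r : X -> R) (Rs : seq R)
  (n m : nat) (eps : R) : R :=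
  m%:R^-1 * \sum_(i : 'I_n)
    \sum_(z : {ffun 'I_n -> (seq_sub Rs * bool)%type})
      (\prod_(j : 'I_n) probRY F r (val (z j).1) (z j).2) *
      select_prob m eps (fun j => val (z j).1) i * ((z i).2)%:R.

From HB Require Import structures.
From mathcomp Require Import all_boot all_order all_algebra.
From mathcomp Require Import boolp ring lra zify.
Set Implicit Arguments. Unset Strict Implicit. Unset Printing Implicit Defensive.
Import Order.TTheory GRing.Theory Num.Theory.
Local Open Scope ring_scope.

(* For fixed scores [s], the mechanism draws an [m]-set [G] with probability proportional
   to [\prod_(i in G) l i], [l i = expR (eps * s i / 2)], and the accuracy is a sum of
   [q i * Pr{i \in G}], where [q i = Pr{R_j = s j for all j, Y_i = 1}] is nondecreasing
   in [s i] by the likelihood ratio property.  Writing [q] as a nonnegative combination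
   of indicators of upper sets of the scores, it suffices that [E #|G :&: U|] does not
   decrease with [eps] for every upper set [U].  Raising [eps] multiplies the weights by
   a nondecreasing function of the score, i.e. by a product of tilts [l i -> c * l i]
   ([c >= 1]) on upper sets [W]; as upper sets are nested, it is enough that such a tilt
   increases [E #|G :&: U|] when [W \subset U] or [U \subset W].  Conditioning on
   [#|G :&: W|], this is a likelihood ratio comparison, which holds because the
   elementary symmetric polynomials of nonnegative weights form a log-concave sequence. *)

Section SubsetSums.
Variables (R : comNzRingType) (I : finType).

Lemma sum_setID (V : nmodType) (D : {set I}) (F : {set I} -> {set I} -> V) :
  \sum_(G : {set I}) F (G :&: D) (G :\: D) =
  \sum_(H : {set I} | H \subset D) \sum_(K : {set I} | K \subset ~: D) F H K.
Proof.
rewrite pair_big_dep (reindex_onto (fun G => (G :&: D, G :\: D)) (fun p => p.1 :|: p.2)).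
  by apply: eq_bigl => G; rewrite /= subsetIr subsetDr setID eqxx.
move=> [H K] /andP[/= sHD sKD]; rewrite -disjoints_subset in sKD.
have sHD' : H :\: D = set0 by apply/eqP; rewrite setD_eq0.
by rewrite setIUl setDUl (setIidPl sHD) (disjoint_setI0 sKD) (setDidPl sKD) sHD' setU0 set0U.
Qed.

Definition set_genpoly (D : {set I}) (Phi : {set I} -> R) : {poly R} :=
  \sum_(H : {set I} | H \subset D) (Phi H)%:P * 'X^#|H|.

Lemma coef_set_genpoly D Phi k :
  (set_genpoly D Phi)`_k = \sum_(H : {set I} | (H \subset D) && (#|H| == k)) Phi H.
Proof.
rewrite coef_sum big_mkcondr; apply: eq_bigr => H _.
by rewrite coefCM coefXn eq_sym; case: eqP; rewrite ?mulr1 ?mulr0.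
Qed.

Lemma set_genpolyM_setC D Phi Psi :
  set_genpoly D Phi * set_genpoly (~: D) Psi =
  \sum_(G : {set I}) (Phi (G :&: D) * Psi (G :\: D))%:P * 'X^#|G|.
Proof.
rewrite big_distrl; under eq_bigr do rewrite big_distrr.
under [RHS]eq_bigr do rewrite -(cardsID D).
rewrite (sum_setID D (fun H K => (Phi H * Psi K)%:P * 'X^(#|H| + #|K|))).
apply: eq_bigr => H _; apply: eq_bigr => K _.
by rewrite polyCM exprD mulrACA.
Qed.

Lemma sum_card_setID D (Phi Psi : {set I} -> R) s :
  \sum_(G : {set I} | #|G| == s) Phi (G :&: D) * Psi (G :\: D) =
  \sum_(k < s.+1) (\sum_(H : {set I} | (H \subset D) && (#|H| == k)) Phi H) *
                  (\sum_(K : {set I} | (K \subset ~: D) && (#|K| == s - k)%N) Psi K).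
Proof.
transitivity ((set_genpoly D Phi * set_genpoly (~: D) Psi)`_s).
  rewrite set_genpolyM_setC coef_sum big_mkcond; apply: eq_bigr => G _.
  by rewrite coefCM coefXn eq_sym; case: eqP; rewrite ?mulr1 ?mulr0.
by rewrite coefM; apply: eq_bigr => k _; rewrite !coef_set_genpoly.
Qed.

End SubsetSums.

Section Sequences.
Variable R : realFieldType.

(* For nonnegative sequences without internal zeros, this is the usual
   [f k ^+ 2 >= f k.-1 * f k.+1]. *)
Definition log_concave (f : nat -> R) :=
  forall a b d, (a <= b)%N -> f a * f (b + d)%N <= f (a + d)%N * f b.

Lemma log_concave_mulXaddC (f : nat -> R) c :
  (forall k, 0 <= f k) -> 0 <= c -> log_concave f ->
  log_concave (fun k => c * (if k == 0%N then 0 else f k.-1) + f k).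
Proof.
move=> f_ge0 c_ge0 lcf a b [|d] le_ab; first by rewrite !addn0 mulrC.
have cc_ge0 : 0 <= c * c by apply: mulr_ge0.
case: a le_ab => [|a] le_ab.
- rewrite /= !add0n addnS /=.
  have h1 := lcf 0%N b d.+1 (leq0n _); rewrite !add0n in h1.
  have h2 := ler_wpM2l c_ge0 (lcf 0%N b d (leq0n _)); rewrite !add0n in h2.
  have fb_ge0 : 0 <= (if b == 0%N then 0 else f b.-1) by case: ifP.
  have := mulr_ge0 cc_ge0 (mulr_ge0 (f_ge0 d) fb_ge0).
  have := mulr_ge0 c_ge0 (mulr_ge0 (f_ge0 d.+1) fb_ge0).
  have := mulr_ge0 c_ge0 (mulr_ge0 (f_ge0 d) (f_ge0 b)).
  move: h1 h2 fb_ge0; rewrite addnS /=; nra.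
- case: b le_ab => [|b] // le_ab.
  rewrite /= !addSn /= !addnS /=.
  have h1 := ler_wpM2l cc_ge0 (lcf a b d.+1 le_ab).
  have h2 := ler_wpM2l c_ge0 (lcf a.+1 b.+1 d le_ab).
  have h3 := ler_wpM2l c_ge0 (lcf a b d.+2 le_ab).
  have h4 := lcf a.+1 b.+1 d.+1 le_ab.
  rewrite !addSn !addnS in h1 h2 h3 h4; nra.
Qed.

Lemma log_concave_coef_prod (I : finType) (c : I -> R) : (forall i, 0 <= c i) ->
  log_concave (fun k => (\prod_i ((c i)%:P * 'X + 1))`_k).
Proof.
move=> c_ge0; pose P (p : {poly R}) := (forall k, 0 <= p`_k) /\ log_concave (fun k => p`_k).
suff [] : P (\prod_i ((c i)%:P * 'X + 1)) by [].
elim/big_rec: _ => [|i p _ [p_ge0 lcp]].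
  split=> [k|a b d]; rewrite !coef1; first by case: (k == 0%N).
  by case: a b d => [|a] [|b] [|d] //=; rewrite ?mul0r ?mulr0 ?mul1r.
have coefE k : (((c i)%:P * 'X + 1) * p)`_k = c i * (if k == 0%N then 0 else p`_k.-1) + p`_k.
  by rewrite mulrDl mul1r -mulrA coefD coefCM coefXM.
split=> [k|]; first by rewrite coefE addr_ge0 ?mulr_ge0 //; case: ifP.
move=> a b d; rewrite !coefE; exact: log_concave_mulXaddC.
Qed.

(* Chebyshev's trick: twice the difference of the two sides is
   [\sum_(a, b) (phi b - phi a) * (N a * Z b - N b * Z a)], a sum of nonnegative terms. *)
Lemma lr_mean_le K (phi N Z : nat -> R) :
  {homo phi : a b / (a <= b)%N >-> a <= b} ->
  (forall a b, (a <= b)%N -> N b * Z a <= N a * Z b) ->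
  (\sum_(k < K) phi k * N k) * (\sum_(k < K) Z k) <=
  (\sum_(k < K) N k) * (\sum_(k < K) phi k * Z k).
Proof.
move=> phi_mono NZ.
pose X (a b : 'I_K) := (phi b - phi a) * (N a * Z b).
have X_sym_ge0 a b : 0 <= X a b + X b a.
  rewrite /X; case: (leqP a b) => h.
    by have := phi_mono a b h; have := NZ a b h; nra.
  by have := phi_mono b a (ltnW h); have := NZ b a (ltnW h); nra.
rewrite -subr_ge0.
have -> : (\sum_(k < K) N k) * (\sum_(k < K) phi k * Z k) -
           (\sum_(k < K) phi k * N k) * (\sum_(k < K) Z k) = \sum_a \sum_b X a b.
  rewrite !big_distrl -sumrB; apply: eq_bigr => a _.
  by rewrite !big_distrr -sumrB; apply: eq_bigr => b _ /=; rewrite /X; ring.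
have : 0 <= \sum_a \sum_b (X a b + X b a).
  by apply: sumr_ge0 => a _; apply: sumr_ge0 => b _; apply: X_sym_ge0.
under eq_bigr do rewrite big_split.
rewrite big_split /= [X in _ + X]exchange_big /=; lra.
Qed.

End Sequences.

Section Weights.
Variables (R : realFieldType) (I : finType).
Implicit Types (l : I -> R) (A C D G H U W : {set I}).

Definition wprod l G := \prod_(i in G) l i.
Definition esym l k := \sum_(G : {set I} | #|G| == k) wprod l G.
Definition esym_count l C k :=
  \sum_(G : {set I} | #|G| == k) wprod l G * #|G :&: C|%:R.
Definition wrestr D l i := if i \in D then l i else 0.
Definition tilt A c l i := if i \in A then c * l i else l i.

Lemma tilt1 A l : tilt A 1 l = l.
Proof. by apply/funext => i; rewrite /tilt mul1r if_same. Qed.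

Lemma tilt_gt0 A c l : 0 < c -> (forall i, 0 < l i) -> forall i, 0 < tilt A c l i.
Proof. by move=> c_gt0 l_gt0 i; rewrite /tilt; case: ifP; rewrite ?mulr_gt0. Qed.

Lemma wprod_setID D l G : wprod l G = wprod l (G :&: D) * wprod l (G :\: D).
Proof. exact: big_setID. Qed.

Lemma wprod_wrestr D l H : wprod (wrestr D l) H = if H \subset D then wprod l H else 0.
Proof.
case: ifPn => [sHD|/subsetPn[i iH iD]].
  by apply: eq_bigr => i iH; rewrite /wrestr (subsetP sHD i iH).
by rewrite /wprod (bigD1 i) //= /wrestr (negPf iD) mul0r.
Qed.

Lemma sum_wprod_wrestr D l k (g : {set I} -> R) :
  \sum_(H : {set I} | (H \subset D) && (#|H| == k)) wprod l H * g H =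
  \sum_(H : {set I} | #|H| == k) wprod (wrestr D l) H * g H.
Proof.
rewrite big_mkcond [RHS]big_mkcond; apply: eq_bigr => H _.
by rewrite wprod_wrestr; case: (H \subset D); case: (_ == k); rewrite ?mul0r.
Qed.

Lemma esym_wrestr D l k :
  \sum_(H : {set I} | (H \subset D) && (#|H| == k)) wprod l H = esym (wrestr D l) k.
Proof.
rewrite /esym -(eq_bigr _ (fun H _ => mulr1 (wprod (wrestr D l) H))) -sum_wprod_wrestr.
by apply: eq_bigr => H _; rewrite mulr1.
Qed.

Lemma wprod_tilt_in A c l H : H \subset A -> wprod (tilt A c l) H = c ^+ #|H| * wprod l H.
Proof.
move=> sHA; rewrite /wprod -prodr_const -big_split.
by apply: eq_bigr => i iH; rewrite /tilt (subsetP sHA i iH).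
Qed.

Lemma wprod_tilt_out A c l H : H \subset ~: A -> wprod (tilt A c l) H = wprod l H.
Proof.
move=> sHA; apply: eq_bigr => i /(subsetP sHA).
by rewrite inE /tilt => /negPf ->.
Qed.

Lemma esym_tilt_split A c l s :
  esym (tilt A c l) s =
  \sum_(k < s.+1) c ^+ k * (esym (wrestr A l) k * esym (wrestr (~: A) l) (s - k)%N).
Proof.
rewrite [LHS]/esym; under eq_bigr do rewrite (wprod_setID A).
rewrite sum_card_setID; apply: eq_bigr => k _; rewrite -!esym_wrestr mulrA.
congr (_ * _); first rewrite big_distrr.
  by apply: eq_bigr => H /andP[sHA /eqP <-]; apply: wprod_tilt_in.
by apply: eq_bigr => K /andP[sKA _]; apply: wprod_tilt_out.
Qed.

Lemma esym_split C l s :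
  esym l s = \sum_(k < s.+1) esym (wrestr C l) k * esym (wrestr (~: C) l) (s - k)%N.
Proof. by rewrite -{1}(tilt1 C l) esym_tilt_split; under eq_bigr do rewrite expr1n mul1r. Qed.

Lemma esym_count_split C l s :
  esym_count l C s =
  \sum_(k < s.+1) k%:R * (esym (wrestr C l) k * esym (wrestr (~: C) l) (s - k)%N).
Proof.
rewrite /esym_count; under eq_bigr do rewrite (wprod_setID C) mulrAC.
rewrite (sum_card_setID C (fun H => wprod l H * #|H|%:R)).
apply: eq_bigr => k _; rewrite -!esym_wrestr mulrA; congr (_ * _).
by rewrite big_distrr; apply: eq_bigr => H /andP[_ /eqP ->]; rewrite mulrC.
Qed.

Lemma esym_count_tilt_split A C c l s : C \subset ~: A ->
  esym_count (tilt A c l) C s =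
  \sum_(k < s.+1) c ^+ k * (esym (wrestr A l) k * esym_count (wrestr (~: A) l) C (s - k)%N).
Proof.
move=> sCA; rewrite /esym_count.
have cardC G : #|G :&: C| = #|(G :\: A) :&: C|.
  by rewrite setDE -setIA (setIidPr sCA).
under eq_bigr do rewrite (wprod_setID A) cardC -mulrA.
rewrite (sum_card_setID A _ (fun K => wprod (tilt A c l) K * #|K :&: C|%:R)).
apply: eq_bigr => k _; rewrite -esym_wrestr -sum_wprod_wrestr mulrA.
congr (_ * _); first rewrite big_distrr.
  by apply: eq_bigr => H /andP[sHA /eqP <-]; apply: wprod_tilt_in.
by apply: eq_bigr => K /andP[sKA _]; rewrite wprod_tilt_out.
Qed.

Lemma prod_XaddC l : \prod_i ((l i)%:P * 'X + 1) = set_genpoly [set: I] (wprod l).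
Proof.
rewrite bigA_distr; apply: eq_big => [J|J _]; first by rewrite subsetT.
rewrite -big_mkcond /= big_split /= prodr_const.
by rewrite -(rmorph_prod (@polyC R)).
Qed.

Lemma esym_coef l k : esym l k = (\prod_i ((l i)%:P * 'X + 1))`_k.
Proof. by rewrite prod_XaddC coef_set_genpoly; apply: eq_bigl => G; rewrite subsetT. Qed.

Lemma esym_log_concave l : (forall i, 0 <= l i) -> log_concave (esym l).
Proof. by move=> l_ge0 a b d; rewrite !esym_coef; apply: log_concave_coef_prod. Qed.

Lemma esym_ge0 l k : (forall i, 0 <= l i) -> 0 <= esym l k.
Proof. by move=> l_ge0; apply: sumr_ge0 => G _; apply: prodr_ge0 => i _. Qed.

Lemma wrestr_ge0 D l : (forall i, 0 <= l i) -> forall i, 0 <= wrestr D l i.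
Proof. by move=> l_ge0 i; rewrite /wrestr; case: ifP. Qed.

(* The weight of [#|G :&: C| = k] among the [s]-sets is
   [esym (wrestr C l) k * esym (wrestr (~: C) l) (s - k)]; log-concavity of the second
   factor makes these weights increase with [s] in likelihood ratio. *)
Lemma esym_count_ratio_mono l C t s : (forall i, 0 <= l i) -> (t <= s)%N ->
  esym_count l C t * esym l s <= esym_count l C s * esym l t.
Proof.
move=> l_ge0 le_ts.
set a := esym (wrestr C l); set b := esym (wrestr (~: C) l).
have a_ge0 k : 0 <= a k by apply/esym_ge0/wrestr_ge0.
have b_ge0 k : 0 <= b k by apply/esym_ge0/wrestr_ge0.
have lcb : log_concave b by apply/esym_log_concave/wrestr_ge0.
pose N k := if (k <= t)%N then a k * b (t - k)%N else 0.
pose Z k := a k * b (s - k)%N.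
have countEt : esym_count l C t = \sum_(k < s.+1) k%:R * N k.
  rewrite esym_count_split (big_ord_widen s.+1 (fun k => k%:R * (a k * b (t - k)%N))) //.
  by rewrite big_mkcond; apply: eq_bigr => k _; rewrite /N ltnS; case: ifP; rewrite ?mulr0.
have esymEt : esym l t = \sum_(k < s.+1) N k.
  rewrite (esym_split C) (big_ord_widen s.+1 (fun k => a k * b (t - k)%N)) //.
  by rewrite big_mkcond; apply: eq_bigr => k _; rewrite /N ltnS; case: ifP.
rewrite countEt esymEt esym_count_split (esym_split C).
rewrite [X in _ <= X]mulrC; apply: (@lr_mean_le _ _ (fun k => k%:R) N Z) => [x y|x y le_xy].
  by rewrite ler_nat.
rewrite /N /Z; case: (leqP y t) => [le_yt|lt_ty]; last first.
  by rewrite mul0r; case: ifP => _; rewrite ?mul0r // !mulr_ge0.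
rewrite (leq_trans le_xy le_yt) mulrACA [X in _ <= X]mulrACA [a y * _]mulrC.
apply: ler_wpM2l; first exact: mulr_ge0.
have e1 : (s - y + (y - x) = s - x)%N by lia.
have e2 : (t - y + (y - x) = t - x)%N by lia.
by have := lcb (t - y)%N (s - y)%N (y - x)%N (leq_sub2r y le_ts); rewrite e1 e2.
Qed.

(* Conditioning on [#|G :&: A| = k], the tilt reweights [k] by [c ^+ k], while the
   conditional mean of [#|G :&: C|] decreases in [k] by [esym_count_ratio_mono]. *)
Lemma esym_count_tilt_le l A C c s : (forall i, 0 <= l i) -> C \subset ~: A -> 1 <= c ->
  esym_count (tilt A c l) C s * esym l s <= esym_count l C s * esym (tilt A c l) s.
Proof.
move=> l_ge0 sCA c_ge1.
set a := esym (wrestr A l); set b := esym (wrestr (~: A) l).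
set f := esym_count (wrestr (~: A) l) C.
pose N k := a k * f (s - k)%N; pose Z k := a k * b (s - k)%N.
have countE : esym_count l C s = \sum_(k < s.+1) N k.
  by rewrite -{1}(tilt1 A l) esym_count_tilt_split //; under eq_bigr do rewrite expr1n mul1r.
rewrite countE (esym_split A) esym_count_tilt_split // esym_tilt_split.
apply: (@lr_mean_le _ _ (fun k => c ^+ k) N Z) => [x y|x y le_xy]; first exact: ler_weXn2l.
rewrite /N /Z mulrACA [X in _ <= X]mulrACA [a y * _]mulrC.
apply: ler_wpM2l; first by apply/mulr_ge0; apply/esym_ge0/wrestr_ge0.
exact/esym_count_ratio_mono/leq_sub2l/le_xy/wrestr_ge0.
Qed.

Lemma esym_count_setC l U k : esym_count l U k + esym_count l (~: U) k = k%:R * esym l k.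
Proof.
rewrite /esym_count -big_split /= /esym big_distrr /=; apply: eq_bigr => G /eqP GE.
by rewrite -mulrDr -natrD -setDE cardsID GE mulrC.
Qed.

End Weights.

Section MeanCount.
Variables (R : realFieldType) (I : finType) (m : nat).
Hypothesis le_m_card : (m <= #|I|)%N.
Implicit Types (l : I -> R) (A C U W : {set I}).

(* The expected size of [G :&: U] when the [m]-set [G] is drawn with probability
   proportional to [wprod l G]. *)
Definition mean_count l U := esym_count l U m / esym l m.

Lemma esym_gt0 l : (forall i, 0 < l i) -> 0 < esym l m.
Proof.
move=> l_gt0; have : (0 < #|[set G : {set I} | #|G| == m]|)%N by rewrite card_draws bin_gt0.
case/card_gt0P => G0; rewrite inE => G0m.
rewrite /esym (bigD1 G0) //= ltr_pwDl ?prodr_gt0 //.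
by apply: sumr_ge0 => G _; apply: prodr_ge0 => i _; apply: ltW.
Qed.

Lemma mean_count_le l1 l2 U : (forall i, 0 < l1 i) -> (forall i, 0 < l2 i) ->
  esym_count l1 U m * esym l2 m <= esym_count l2 U m * esym l1 m ->
  mean_count l1 U <= mean_count l2 U.
Proof. by move=> ? ?; rewrite ler_pdivrMr ?esym_gt0 // mulrAC ler_pdivlMr ?esym_gt0. Qed.

Lemma mean_count_scale k l U : 0 < k -> mean_count (fun i => k * l i) U = mean_count l U.
Proof.
move=> k_gt0; have wprodZ G : wprod (fun i => k * l i) G = k ^+ #|G| * wprod l G.
  by rewrite /wprod big_split /= prodr_const.
rewrite /mean_count /esym_count /esym.
under eq_bigr => G /eqP GE do rewrite wprodZ GE -mulrA.
under [in X in _ / X]eq_bigr => G /eqP GE do rewrite wprodZ GE.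
by rewrite -!big_distrr /= invfM mulrACA divff ?mul1r // expf_neq0 ?gt_eqF.
Qed.

Lemma mean_count_setC l U : (forall i, 0 < l i) ->
  mean_count l (~: U) = m%:R - mean_count l U.
Proof.
move=> l_gt0; apply/eqP; rewrite eq_sym subr_eq addrC /mean_count -mulrDl esym_count_setC.
by rewrite mulfK ?lt0r_neq0 ?esym_gt0.
Qed.

Lemma mean_count_tilt_disjoint l A C c : (forall i, 0 < l i) -> C \subset ~: A -> 1 <= c ->
  mean_count (tilt A c l) C <= mean_count l C.
Proof.
move=> l_gt0 sCA c_ge1; apply: mean_count_le => //.
  exact/tilt_gt0/l_gt0/(lt_le_trans ltr01 c_ge1).
by apply: esym_count_tilt_le => // i; apply: ltW.
Qed.

(* Up to the factor [c], tilting [A] by [c] is tilting [~: A] by [c^-1]. *)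
Lemma mean_count_tilt_sub l A C c : (forall i, 0 < l i) -> C \subset A -> 1 <= c ->
  mean_count l C <= mean_count (tilt A c l) C.
Proof.
move=> l_gt0 sCA c_ge1; have c_gt0 : 0 < c := lt_le_trans ltr01 c_ge1.
pose mu := tilt (~: A) c^-1 l.
have -> : tilt A c l = (fun i => c * mu i).
  apply/funext => i; rewrite /mu /tilt inE.
  by case: (i \in A) => //=; rewrite mulrA divff ?mul1r ?gt_eqF.
rewrite {1}(_ : l = tilt (~: A) c mu); last first.
  apply/funext => i; rewrite /mu /tilt.
  by case: (i \in ~: A); rewrite // mulrA divff ?mul1r ?gt_eqF.
rewrite mean_count_scale //; apply: mean_count_tilt_disjoint; rewrite ?setCK //.
by apply: tilt_gt0; rewrite ?invr_gt0.
Qed.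

Lemma mean_count_tilt_nested l W U c : (forall i, 0 < l i) ->
  W \subset U \/ U \subset W -> 1 <= c -> mean_count l U <= mean_count (tilt W c l) U.
Proof.
move=> l_gt0 [sWU|sUW] c_ge1; last exact: mean_count_tilt_sub.
have tilt_gt0' := tilt_gt0 W (lt_le_trans ltr01 c_ge1) l_gt0.
have setCE l' : (forall i, 0 < l' i) -> mean_count l' U = m%:R - mean_count l' (~: U).
  by move=> ?; rewrite -mean_count_setC ?setCK.
rewrite !setCE // lerD2l lerN2.
by apply: mean_count_tilt_disjoint; rewrite ?setCS.
Qed.

Definition incl_prob l i :=
  \sum_(G : {set I} | (#|G| == m) && (i \in G)) wprod l G / esym l m.

Lemma sum_incl_prob l U : \sum_(i in U) incl_prob l i = mean_count l U.
Proof.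
rewrite /incl_prob /mean_count /esym_count mulr_suml.
rewrite (exchange_big_dep (fun G : {set I} => #|G| == m)) /=; last by move=> i G _ /andP[].
apply: eq_bigr => G /eqP GE; rewrite (eq_bigl (mem (G :&: U))); last first.
  by move=> i; rewrite !inE GE eqxx andbC.
by rewrite sumr_const mulrAC mulr_natr.
Qed.

End MeanCount.

Section UpperSets.
Variables (R : realFieldType) (I : finType) (r : I -> R).

Definition upper_set (U : {set I}) := forall i j, i \in U -> r i <= r j -> j \in U.

Lemma upper_set_nested W U : upper_set W -> upper_set U -> W \subset U \/ U \subset W.
Proof.
move=> upW upU; case: (boolP (W \subset U)) => [|/subsetPn[i iW iU]]; [by left | right].
apply/subsetP => j jU; case: (lerP (r i) (r j)) => [le_ij|/ltW le_ji]; first exact: upW le_ij.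
by rewrite (upU j i jU le_ji) in iU.
Qed.

(* Peel off the least positive value of [h] times the indicator of the support of
   [h], which is an upper set. *)
Lemma upper_set_ind (P : (I -> R) -> Prop) :
  P (fun=> 0) ->
  (forall h U c, upper_set U -> 0 < c -> P h -> P (fun i => h i + c * (i \in U)%:R)) ->
  forall h, (forall i, 0 <= h i) -> (forall i j, r i <= r j -> h i <= h j) -> P h.
Proof.
move=> P0 Pstep h; have [k] := ubnP #|[set i | h i != 0]|.
elim: k h => // k IH h + h_ge0 h_mono; set S := [set i | h i != 0] => ltSk.
have [S0|[i0 i0S]] := set_0Vmem S.
  suff -> : h = (fun=> 0) by [].
  by apply/funext => i; apply/eqP/negbFE; rewrite -(in_set0 i) -S0 inE.
have h_gt0 i : i \in S -> 0 < h i by rewrite inE lt0r h_ge0 andbT.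
have upS : upper_set S.
  by move=> i j iS le_ij; rewrite inE gt_eqF // (lt_le_trans (h_gt0 i iS) (h_mono i j le_ij)).
case: (arg_minP h i0S) => i1 i1S' i1_min; have i1S : i1 \in S := i1S'.
pose h' i := h i - h i1 * (i \in S)%:R.
have hS i : i \notin S -> h i = 0 by rewrite inE negbK => /eqP.
have -> : h = (fun i => h' i + h i1 * (i \in S)%:R) by apply/funext => i; rewrite subrK.
apply: Pstep => //; first exact: h_gt0.
have h'_ge0 i : 0 <= h' i.
  rewrite /h'; case: (boolP (i \in S)) => [/i1_min le_i1|/hS ->]; last by rewrite mulr0 subrr.
  by rewrite mulr1 subr_ge0; apply: le_i1.
apply: IH => // [|i j le_ij].
- apply: leq_ltn_trans (_ : #|S :\ i1| < k)%N; last by move: ltSk; rewrite (cardsD1 i1) i1S.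
  apply/subset_leq_card/subsetP => i; rewrite in_set in_setD1 /h'.
  case: (boolP (i \in S)) => [iS|/hS ->]; last by rewrite mulr0 subrr eqxx.
  by rewrite mulr1 subr_eq0 andbT; apply: contraNneq => ->.
rewrite {1}/h'; case: (boolP (i \in S)) => [iS|/hS ->]; last by rewrite mulr0 subrr.
by rewrite /h' (upS i j iS le_ij) !mulr1 lerD2r h_mono.
Qed.

Lemma sum_mul_le_upper (x y q : I -> R) :
  (forall U, upper_set U -> \sum_(i in U) x i <= \sum_(i in U) y i) ->
  (forall i, 0 <= q i) -> (forall i j, r i <= r j -> q i <= q j) ->
  \sum_i q i * x i <= \sum_i q i * y i.
Proof.
move=> le_xy; apply: (upper_set_ind (P := fun q => \sum_i q i * x i <= \sum_i q i * y i)).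
  by rewrite !big1 // => i _; rewrite mul0r.
move=> h U c upU c_gt0 IH.
have splitE (z : I -> R) :
    \sum_i (h i + c * (i \in U)%:R) * z i = \sum_i h i * z i + c * \sum_(i in U) z i.
  rewrite big_distrr [\sum_(i in U) _]big_mkcond -big_split; apply: eq_bigr => i _ /=.
  by case: (i \in U); rewrite /= ?mulr1 ?mulr0 ?mul0r ?addr0 // mulrDl.
by rewrite !splitE lerD // ler_wpM2l ?(ltW c_gt0) ?le_xy.
Qed.

End UpperSets.

From mathcomp Require Import all_classical all_reals all_analysis.

Section ExpTilt.
Variables (R : realType) (I : finType) (m : nat).
Hypothesis le_m_card : (m <= #|I|)%N.

Lemma mean_count_expR_tilt (r l h : I -> R) U :
  (forall i, 0 < l i) -> upper_set r U ->
  (forall i, 0 <= h i) -> (forall i j, r i <= r j -> h i <= h j) ->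
  mean_count m l U <= mean_count m (fun i => l i * expR (h i)) U.
Proof.
move=> l_gt0 upU.
apply: (upper_set_ind
  (P := fun h => mean_count m l U <= mean_count m (fun i => l i * expR (h i)) U)).
  by rewrite (_ : (fun i => _) = l) //; apply/funext => i; rewrite expR0 mulr1.
move=> h' W c upW c_gt0 IH; apply: le_trans IH _.
have -> : (fun i => l i * expR (h' i + c * (i \in W)%:R)) =
          tilt W (expR c) (fun i => l i * expR (h' i)).
  apply/funext => i; rewrite /tilt expRD; case: (i \in W); last by rewrite mulr0 expR0 mulr1.
  by rewrite mulr1 mulrA mulrC.
apply: mean_count_tilt_nested => //; last by rewrite -expR0 ler_expR ltW.
  by move=> i; rewrite mulr_gt0 ?expR_gt0.
exact: upper_set_nested upW upU.
Qed.

Lemma incl_prob_expR_mono (s q : I -> R) e1 e2 :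
  (forall i, 0 <= s i) -> e1 <= e2 ->
  (forall i, 0 <= q i) -> (forall i j, s i <= s j -> q i <= q j) ->
  \sum_i q i * incl_prob m (fun j => expR (e1 * s j / 2)) i <=
  \sum_i q i * incl_prob m (fun j => expR (e2 * s j / 2)) i.
Proof.
move=> s_ge0 le_e12 q_ge0 q_mono; apply: (sum_mul_le_upper (r := s)) => // U upU.
rewrite !sum_incl_prob.
have -> : (fun j => expR (e2 * s j / 2)) =
          (fun j => expR (e1 * s j / 2) * expR ((e2 - e1) * s j / 2)).
  by apply/funext => j; rewrite -expRD; congr expR; ring.
apply: (mean_count_expR_tilt (r := s)) => // [i|i|i j le_ij]; first exact: expR_gt0.
  by rewrite divr_ge0 // mulr_ge0 // subr_ge0.
by rewrite ler_pM2r // ler_wpM2l // subr_ge0.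
Qed.

End ExpTilt.

Lemma sum_ffun_pair (I A B : finType) (V : nmodType) (f : {ffun I -> A * B} -> V) :
  \sum_(z : {ffun I -> A * B}) f z =
  \sum_(a : {ffun I -> A}) \sum_(b : {ffun I -> B}) f [ffun j => (a j, b j)].
Proof.
pose pair_ffun (p : {ffun I -> A} * {ffun I -> B}) := [ffun j => (p.1 j, p.2 j)].
rewrite pair_big /= (reindex pair_ffun) //.
exists (fun z : {ffun I -> A * B} => ([ffun j => (z j).1], [ffun j => (z j).2])) => [[a b]|z] _.
  by congr (_, _); apply/ffunP => j; rewrite !ffunE.
by apply/ffunP => j; rewrite !ffunE; case: (z j).
Qed.

Lemma sum_ffun_bool_prod (R : comNzRingType) (I : finType) (p : I -> bool -> R) i :
  \sum_(y : {ffun I -> bool}) (\prod_j p j (y j)) * (y i)%:R =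
  p i true * \prod_(j | j != i) (p j true + p j false).
Proof.
transitivity (\sum_(y : {ffun I -> bool}) \prod_j (p j (y j) * (if j == i then (y j)%:R else 1))).
  apply: eq_bigr => y _; rewrite big_split /=; congr (_ * _).
  by rewrite (bigD1 i) //= eqxx big1 ?mulr1 // => j /negPf ->.
rewrite -(bigA_distr_bigA (fun j b => p j b * (if j == i then b%:R else 1))) /=.
rewrite (bigD1 i) //= big_bool /= eqxx mulr1 mulr0 addr0; congr (_ * _).
by apply: eq_bigr => j /negPf ->; rewrite big_bool /= !mulr1.
Qed.

Section JointLaw.
Variables (R : realType) (d : measure_display) (X : measurableType d).
Variables (F : probability (X * bool * bool)%type R) (r : X -> R).
Hypothesis r_mes : measurable_fun setT r.
Local Open Scope classical_set_scope.

Lemma measurable_Y (y : bool) : measurable [set t : X * bool * bool | t.2 = y].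
Proof.
(* [I : True] proves [measurable [set y]]: every subset of [bool] is measurable. *)
by have := @measurable_snd _ _ (X * bool)%type bool measurableT [set y] I; rewrite setTI.
Qed.

Lemma measurable_RY rho (y : bool) :
  measurable [set t : X * bool * bool | r t.1.1 = rho /\ t.2 = y].
Proof.
rewrite (_ : [set t | _] =
  (fun t : X * bool * bool => r t.1.1) @^-1` [set rho] `&` [set t | t.2 = y]) //.
apply: measurableI (measurable_Y y); rewrite -[X in measurable X]setTI.
by apply: (measurableT_comp r_mes) => //; apply: measurableT_comp.
Qed.

Lemma probRY_ge0 rho y : 0 <= probRY F r rho y.
Proof. exact/fine_ge0/measure_ge0. Qed.

Lemma probRY_le_probY rho y : probRY F r rho y <= probY F y.
Proof.
apply: fine_le.
- by apply: fin_num_measure; apply: measurable_RY.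
- by apply: fin_num_measure; apply: measurable_Y.
by apply: le_measure; rewrite ?inE; [exact: measurable_RY|exact: measurable_Y|move=> t []].
Qed.

Lemma MLR_probRY Rs : MLR F r Rs -> forall rho rho', rho \in Rs -> rho' \in Rs -> rho' < rho ->
  probRY F r rho' true * probRY F r rho false <= probRY F r rho true * probRY F r rho' false.
Proof.
move=> mlr rho rho' Rs_rho Rs_rho' lt_rho; have := mlr rho rho' Rs_rho Rs_rho' lt_rho.
have probRY0 rh y : probY F y = 0 -> probRY F r rh y = 0.
  by move=> PY0; apply/le_anti; rewrite probRY_ge0 -PY0 probRY_le_probY.
have [PY10|PY1] := eqVneq (probY F true) 0; first by rewrite !(probRY0 _ true) // !mul0r.
have [PY00|PY0] := eqVneq (probY F false) 0; first by rewrite !(probRY0 _ false) // !mulr0.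
have PY_gt0 y : probY F y != 0 -> 0 < probY F y.
  by rewrite lt0r => -> /=; apply/fine_ge0/measure_ge0.
by rewrite /condprobR !mulf_div ler_pM2r // invr_gt0 mulr_gt0 ?PY_gt0.
Qed.

End JointLaw.

Lemma select_prob_incl_prob (R : realType) n m (eps : R) (rs : 'I_n -> R) i :
  select_prob m eps rs i = incl_prob m (fun j => expR (eps * rs j / 2)) i.
Proof.
have expR_sum (G : {set 'I_n}) :
    expR (eps * (\sum_(j in G) rs j) / 2) = wprod (fun j => expR (eps * rs j / 2)) G.
  by rewrite /wprod -expR_sum mulr_sumr mulr_suml.
rewrite /select_prob /incl_prob /expmech_weight /esym; apply: eq_bigr => G _.
by rewrite expR_sum; congr (_ / _); apply: eq_bigr => G' _.
Qed.

Section Accuracy.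
Variables (R : realType) (d : measure_display) (X : measurableType d).
Variables (F : probability (X * bool * bool)%type R) (r : X -> R) (Rs : seq R).

(* [Pr{R_j = s j for all j, Y_i = 1}] for independent copies [(R_j, Y_j)] of [(R, Y)]. *)
Definition prob_scores_Y1 (I : finType) (s : I -> R) (i : I) :=
  probRY F r (s i) true * \prod_(j | j != i) (probRY F r (s j) true + probRY F r (s j) false).

Lemma prob_scores_Y1_ge0 (I : finType) (s : I -> R) i : 0 <= prob_scores_Y1 s i.
Proof. by rewrite mulr_ge0 ?probRY_ge0 // prodr_ge0 // => j _; rewrite addr_ge0 ?probRY_ge0. Qed.

Lemma prob_scores_Y1_mono (I : finType) (s : I -> R) i k :
  measurable_fun setT r -> MLR F r Rs -> (forall j, s j \in Rs) ->
  s i <= s k -> prob_scores_Y1 s i <= prob_scores_Y1 s k.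
Proof.
move=> r_mes mlr Rs_s le_ik; have [->//|neq_ik] := eqVneq i k.
rewrite /prob_scores_Y1 (bigD1 k) 1?eq_sym //= [X in _ <= _ * X](bigD1 i) //=.
rewrite (eq_bigl (fun j => (j != k) && (j != i))); last by move=> j; rewrite andbC.
set P := \prod_(j | _) _; have P_ge0 : 0 <= P.
  by apply: prodr_ge0 => j _; rewrite addr_ge0 ?probRY_ge0.
case: (lerP (s k) (s i)) => [le_ki|lt_ik].
  by rewrite (@le_anti _ _ (s i) (s k)) ?le_ik.
have := ler_wpM2r P_ge0 (MLR_probRY r_mes mlr (Rs_s k) (Rs_s i) lt_ik); nra.
Qed.

Lemma accuracyE n m eps : accuracy F r Rs n m eps =
  m%:R^-1 * \sum_(rho : {ffun 'I_n -> seq_sub Rs})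
    \sum_i prob_scores_Y1 (fun j => val (rho j)) i *
           incl_prob m (fun j => expR (eps * val (rho j) / 2)) i.
Proof.
rewrite /accuracy exchange_big sum_ffun_pair; congr (_ * _); apply: eq_bigr => rho _.
rewrite exchange_big; apply: eq_bigr => i _.
set s := fun j => val (rho j).
transitivity (\sum_(y : {ffun 'I_n -> bool})
    select_prob m eps s i * ((\prod_j probRY F r (s j) (y j)) * (y i)%:R)).
  apply: eq_bigr => y _; rewrite ffunE -mulrA mulrCA; congr (select_prob _ _ _ _ * (_ * _)).
  - by apply/funext => j; rewrite ffunE.
  - by apply: eq_bigr => j _; rewrite ffunE.
rewrite -big_distrr /= (sum_ffun_bool_prod (fun j => probRY F r (s j))).
by rewrite select_prob_incl_prob mulrC.
Qed.

End Accuracy.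

Local Open Scope classical_set_scope.

Theorem mainTheorem8 (R : realType) (d : measure_display) (X : measurableType d)
  (F : probability (X * bool * bool)%type R) (Rs : seq R) (r : X -> R) :
  (forall rho, rho \in Rs -> 0 <= rho <= 1) ->
  (forall x, r x \in Rs) ->
  measurable_fun setT r ->
  MLR F r Rs ->
  forall n m : nat, (1 <= m <= n)%N ->
  forall eps1 eps2 : R, 0 <= eps1 -> eps1 <= eps2 ->
    accuracy F r Rs n m eps1 <= accuracy F r Rs n m eps2.
Proof.
move=> Rs_01 _ r_mes mlr n m /andP[_ le_mn] eps1 eps2 _ le_eps.
rewrite !accuracyE; apply: ler_wpM2l; first by rewrite invr_ge0 ler0n.
apply: ler_sum => rho _; set s := fun j => val (rho j).
have Rs_s j : s j \in Rs by apply: valP.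
apply: incl_prob_expR_mono => //; first by rewrite card_ord.
- by move=> j; have /andP[] := Rs_01 _ (Rs_s j).
- exact: prob_scores_Y1_ge0.
- by move=> i j; apply: (prob_scores_Y1_mono r_mes mlr Rs_s).
Qed.
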